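(* Let $(X,d_X)$ be a geodesic metric space and $F\colon\mathbb{H}^n\to X$ satisfy hypotheses (1)–(4) with constants $\delta,\epsilon,R>0$: (1) each $F\circ\eta_x$ is a geodesic; (2) for distinct $x,x'$, $F\circ\eta_x$ and $F\circ\eta_{x'}$ are two sides of an ideal $\delta$-slim triangle in $X$; (3) $e^{-t}|x-x'|<\epsilon$ implies $d_X(F(x,t),F(x',t))\le R$; (4) $e^{-t_k}|x_k-x_k'|\to\infty$ implies $d_X(F(x_k,t_k),F(x_k',t_k))\to\infty$. Then there exists a constant $C_0=C_0(F)$ such that $t(r)-h_T\le C_0$ for every vertical triangle $T\subset\mathbb{H}^n$, where $r$ is the midpoint of the non-vertical side of $T$.
   Context: Exponential model $\mathbb{H}^n=\mathbb{R}^{n-1}\times\mathbb{R}$, coordinates $(x,t)$, metric $e^{-2t}|dx|^2+dt^2$; $\eta_x(t)=(x,t)$. An ideal $\delta$-slim triangle: three bi-infinite geodesics forming an ideal triangle, each side in the closed $\delta$-neighborhood of the union of the other two. A vertical triangle $T=\mathcal{P}\cup\mathcal{Q}\cup\mathcal{R}$ is an ideal triangle with vertical sides $\mathcal{P}=\eta_x(\mathbb{R})$, $\mathcal{Q}=\eta_{x'}(\mathbb{R})$, $x\ne x'$, and third side $\mathcal{R}$; its midpoint $r$ is the point of $\mathcal{R}$ of maximal $t$-coordinate $t(r)$. With $\Delta=\max\{3\delta,2R/\epsilon+R\}$, the displaced height is $h_T=\min\{t : d_X(F(x,t),F(\mathcal{Q}))\le\Delta\text{ or }d_X(F(\mathcal{P}),F(x',t))\le\Delta\}$,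 a finite number. *)

From Stdlib Require Import Reals Lra.
Open Scope R_scope.

Definition Rn (m : nat) : Type := {x : nat -> R | forall i, (m <= i)%nat -> x i = 0}.

Fixpoint sumsq (f : nat -> R) (m : nat) : R :=
  match m with
  | O => 0
  | S k => sumsq f k + f k * f k
  end.

Definition euc {m : nat} (x y : Rn m) : R :=
  sqrt (sumsq (fun i => proj1_sig x i - proj1_sig y i) m).

Definition is_metric {X : Type} (d : X -> X -> R) : Prop :=
  (forall p q, 0 <= d p q) /\
  (forall p q, d p q = 0 <-> p = q) /\
  (forall p q, d p q = d q p) /\
  (forall p q r, d p r <= d p q + d q r).

Definition geodesic_space {X : Type} (d : X -> X -> R) : Prop :=
  forall p q : X, exists g : R -> X,
    g 0 = p /\ g (d p q) = q /\
    forall s u, 0 <= s <= d p q -> 0 <= u <= d p q -> d (g s) (g u) = Rabs (s - u).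

Definition geodesic {X : Type} (d : X -> X -> R) (g : R -> X) : Prop :=
  forall s u, d (g s) (g u) = Rabs (s - u).

Definition rev {X : Type} (g : R -> X) : R -> X := fun s => g (- s).

(* the rays s |-> a s and s |-> b s (s >= 0) are at finite Hausdorff distance *)
Definition asymptotic {X : Type} (d : X -> X -> R) (a b : R -> X) : Prop :=
  exists K : R,
    (forall s, 0 <= s -> exists u, 0 <= u /\ d (a s) (b u) <= K) /\
    (forall u, 0 <= u -> exists s, 0 <= s /\ d (a s) (b u) <= K).

(* ideal triangle with sides g1 g2 g3 (each side may be traversed in either
   direction): the forward end of each (oriented) side is asymptotic to the
   backward end of the next one, cyclically. *)
Definition ideal_triangle {X : Type} (d : X -> X -> R) (g1 g2 g3 : R -> X) : Prop :=
  geodesic d g1 /\ geodesic d g2 /\ geodesic d g3 /\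
  exists h1 h2 h3 : R -> X,
    (h1 = g1 \/ h1 = rev g1) /\ (h2 = g2 \/ h2 = rev g2) /\ (h3 = g3 \/ h3 = rev g3) /\
    asymptotic d h1 (rev h2) /\ asymptotic d h2 (rev h3) /\ asymptotic d h3 (rev h1).

(* d(p, A) <= r, for A the image of g : R -> X  (distance = infimum) *)
Definition dist_img_le {X : Type} (d : X -> X -> R) (p : X) (g : R -> X) (r : R) : Prop :=
  forall eta, 0 < eta -> exists u, d p (g u) < r + eta.

Definition dist_img2_le {X : Type} (d : X -> X -> R) (p : X) (g h : R -> X) (r : R) : Prop :=
  forall eta, 0 < eta -> exists u, d p (g u) < r + eta \/ d p (h u) < r + eta.

Definition slim_side {X : Type} (d : X -> X -> R) (delta : R) (g h k : R -> X) : Prop :=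
  forall s, dist_img2_le d (g s) h k delta.

Definition slim_ideal_triangle {X : Type} (d : X -> X -> R) (delta : R)
  (g1 g2 g3 : R -> X) : Prop :=
  ideal_triangle d g1 g2 g3 /\
  slim_side d delta g1 g2 g3 /\ slim_side d delta g2 g1 g3 /\ slim_side d delta g3 g1 g2.

(* points (x, t) with x in R^(n-1), t in R; metric e^{-2t}|dx|^2 + dt^2 *)
Definition Hn (n : nat) : Type := (Rn (n - 1) * R)%type.

Definition arcosh (z : R) : R := ln (z + sqrt (z * z - 1)).

(* Riemannian distance of e^{-2t}|dx|^2+dt^2; with u = e^t this is the upper
   half-space model, whence the classical formula. *)
Definition dH {n : nat} (p q : Hn n) : R :=
  let (x, s) := p in let (y, t) := q in
  arcosh (1 + (euc x y * euc x y + (exp s - exp t) * (exp s - exp t))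
               / (2 * exp s * exp t)).

Definition tcoord {n : nat} (p : Hn n) : R := snd p.

Definition eta {n : nat} (x : Rn (n - 1)) : R -> Hn n := fun t => (x, t).

Definition Delta (delta eps Rc : R) : R := Rmax (3 * delta) (2 * Rc / eps + Rc).

(* the set whose minimum is the displaced height h_T of the vertical
   triangle with vertical sides eta_x, eta_x' *)
Definition height_set {n : nat} {X : Type} (d : X -> X -> R) (F : Hn n -> X)
  (delta eps Rc : R) (x x' : Rn (n - 1)) (t : R) : Prop :=
  dist_img_le d (F (x, t)) (fun u => F (x', u)) (Delta delta eps Rc) \/
  dist_img_le d (F (x', t)) (fun u => F (x, u)) (Delta delta eps Rc).

Definition is_min (S : R -> Prop) (h : R) : Prop := S h /\ forall t, S t -> h <= t.

(* Both quantities are compared with ln |x - x'|, where x, x' are the feet of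
   the vertical sides:
   - Hyperbolic side.  With u = e^t (upper half-space), e^{d_H(p,q)} lies
     between N/(2 u_p u_q) and N/(u_p u_q), where N = |y - z|^2 + u_p^2 + u_q^2
     ([exp_dH_bounds]).  Hence a point m between p and q on a geodesic satisfies
     u_m^2 <= 4 N(p,q) ([between_height]).  Orientation arguments show that the
     third side of T runs from (x', -oo) to (x, -oo), and letting p, q go to
     these ends gives e^{t(r)} <= 5 |x - x'| ([vertical_triangle_top]).
   - Metric side.  Hypothesis (4) gives M with: e^{-t}|y - y'| > M forces
     d_X(F(y,t), F(y',t)) to be large ([coarse_separation]); with hypotheses
     (1) and (3) every point of the height set satisfies e^t >= |x - x'| / M
     ([height_set_lower_bound]).  The height set is closed, nonempty and
     bounded below, so h_T exists ([height_set_has_min]).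
   The theorem follows with C0 = ln 5 + ln M. *)

From Pilot Require Import Defs.
From Stdlib Require Import Reals Lra Lia Psatz Classical ClassicalEpsilon
  FunctionalExtensionality ProofIrrelevance.
Open Scope R_scope.

Lemma exp_le_mono a b : a <= b -> exp a <= exp b.
Proof.
  intros [hlt | ->]; [left; apply exp_increasing; exact hlt | right; reflexivity].
Qed.

Lemma exp_le_inv a b : exp a <= exp b -> a <= b.
Proof.
  intros h; destruct (Rle_lt_dec a b) as [hle | hlt]; [exact hle |].
  apply exp_increasing in hlt; lra.
Qed.

Lemma lt_exp x : x < exp x.
Proof. pose proof (exp_ineq1_le x); lra. Qed.

Lemma sumsq_nonneg f m : 0 <= sumsq f m.
Proof. induction m; simpl; nra. Qed.

Lemma sumsq_ext f g m : (forall i, f i = g i) -> sumsq f m = sumsq g m.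
Proof. intros h; induction m; simpl; [reflexivity | rewrite IHm, h; reflexivity]. Qed.

Lemma sumsq_opp f m : sumsq (fun i => - f i) m = sumsq f m.
Proof. induction m; simpl; [reflexivity | rewrite IHm; ring]. Qed.

Lemma sumsq_add_le f g m :
  sumsq (fun i => f i + g i) m <= 2 * (sumsq f m + sumsq g m).
Proof.
  induction m; simpl; [lra |].
  pose proof (Rle_0_sqr (f m - g m)); unfold Rsqr in *; nra.
Qed.

Lemma sumsq_eq0 f m : sumsq f m = 0 -> forall i, (i < m)%nat -> f i = 0.
Proof.
  induction m as [| m IH]; simpl; intros h i hi; [lia |].
  pose proof (sumsq_nonneg f m).
  assert (hm : sumsq f m = 0 /\ f m * f m = 0) by nra.
  destruct (Nat.eq_dec i m) as [-> | hne]; [nra | apply IH; [tauto | lia]].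
Qed.

Definition sq {m} (y z : Rn m) : R :=
  sumsq (fun i => proj1_sig y i - proj1_sig z i) m.

Lemma euc_sq {m} (y z : Rn m) : euc y z = sqrt (sq y z).
Proof. reflexivity. Qed.

Lemma sq_nonneg {m} (y z : Rn m) : 0 <= sq y z.
Proof. apply sumsq_nonneg. Qed.

Lemma sq_sym {m} (y z : Rn m) : sq y z = sq z y.
Proof.
  unfold sq; rewrite <- sumsq_opp; apply sumsq_ext; intros i; ring.
Qed.

Lemma sq_tri {m} (y z w : Rn m) : sq y w <= 2 * (sq y z + sq z w).
Proof.
  unfold sq.
  rewrite (sumsq_ext _ (fun i => (proj1_sig y i - proj1_sig z i)
                                 + (proj1_sig z i - proj1_sig w i)))
    by (intros; ring).
  apply sumsq_add_le.
Qed.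

Lemma sq_pos {m} (y z : Rn m) : y <> z -> 0 < sq y z.
Proof.
  intros hne; destruct (sq_nonneg y z) as [hlt | h0]; [exact hlt |].
  exfalso; apply hne.
  destruct y as [y hy], z as [z hz]; unfold sq in h0; simpl in h0.
  assert (y = z) as <-.
  { apply functional_extensionality; intros i.
    destruct (Nat.lt_ge_cases i m) as [hi | hi].
    - pose proof (sumsq_eq0 _ _ (eq_sym h0) i hi); simpl in *; lra.
    - rewrite hy, hz by exact hi; reflexivity. }
  f_equal; apply proof_irrelevance.
Qed.

Lemma euc_sym {m} (y z : Rn m) : euc y z = euc z y.
Proof. rewrite !euc_sq, sq_sym; reflexivity. Qed.

Lemma euc_pos {m} (y z : Rn m) : y <> z -> 0 < euc y z.
Proof. intros hne; rewrite euc_sq; apply sqrt_lt_R0, sq_pos, hne. Qed.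

(* height of a point in the upper half-space model u = e^t *)
Definition uheight {n} (p : Hn n) : R := exp (tcoord p).

(* numerator of cosh d_H in the upper half-space model:
   cosh d_H(p, q) = hnum p q / (2 u_p u_q) *)
Definition hnum {n} (p q : Hn n) : R :=
  sq (fst p) (fst q) + uheight p * uheight p + uheight q * uheight q.

Lemma uheight_pos {n} (p : Hn n) : 0 < uheight p.
Proof. apply exp_pos. Qed.

Lemma hnum_sym {n} (p q : Hn n) : hnum p q = hnum q p.
Proof. unfold hnum; rewrite sq_sym; ring. Qed.

Lemma exp_arcosh_bounds z : 1 <= z -> z <= exp (arcosh z) <= 2 * z.
Proof.
  intros hz; unfold arcosh.
  assert (h0 : 0 <= z * z - 1) by nra.
  pose proof (sqrt_pos (z * z - 1)) as hpos.
  assert (hle : sqrt (z * z - 1) <= z).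
  { apply Rle_trans with (sqrt (z * z)); [apply sqrt_le_1_alt; lra |].
    rewrite sqrt_square by lra; lra. }
  rewrite exp_ln by lra; lra.
Qed.

Lemma dH_arcosh {n} (p q : Hn n) :
  dH p q = arcosh (hnum p q / (2 * uheight p * uheight q)).
Proof.
  destruct p as [y s], q as [z t]; unfold dH, hnum, uheight, tcoord; simpl.
  pose proof (exp_pos s); pose proof (exp_pos t).
  rewrite euc_sq, sqrt_sqrt by apply sq_nonneg.
  f_equal; field; lra.
Qed.

Lemma dH_sym {n} (p q : Hn n) : dH p q = dH q p.
Proof. rewrite !dH_arcosh, hnum_sym; f_equal; f_equal; ring. Qed.

Lemma exp_dH_bounds {n} (p q : Hn n) :
  hnum p q <= 2 * uheight p * uheight q * exp (dH p q) /\
  uheight p * uheight q * exp (dH p q) <= hnum p q.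
Proof.
  pose proof (uheight_pos p) as ha; pose proof (uheight_pos q) as hb.
  set (a := uheight p) in *; set (b := uheight q) in *.
  assert (hab : 0 < 2 * a * b) by nra.
  set (z := hnum p q / (2 * a * b)).
  assert (hz : hnum p q = z * (2 * a * b)) by (unfold z; field; lra).
  assert (z1 : 1 <= z).
  { apply (Rmult_le_reg_r (2 * a * b)); [exact hab |].
    rewrite <- hz; unfold hnum; fold a b.
    pose proof (sq_nonneg (fst p) (fst q)); pose proof (Rle_0_sqr (a - b)).
    unfold Rsqr in *; lra. }
  rewrite dH_arcosh; fold a b z.
  destruct (exp_arcosh_bounds z z1) as [hlo hhi]; rewrite hz; split.
  - apply Rmult_le_compat_l with (r := 2 * a * b) in hlo; lra.
  - apply Rmult_le_compat_l with (r := a * b) in hhi; lra.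
Qed.

Lemma exp_dH_lower {n} (p q : Hn n) :
  hnum p q <= 2 * uheight p * uheight q * exp (dH p q).
Proof. apply exp_dH_bounds. Qed.

Lemma exp_dH_upper {n} (p q : Hn n) :
  uheight p * uheight q * exp (dH p q) <= hnum p q.
Proof. apply exp_dH_bounds. Qed.

Lemma exp_tgap_le {n} (p q : Hn n) :
  exp (tcoord p - tcoord q) <= 2 * exp (dH p q).
Proof.
  pose proof (uheight_pos p) as ha; pose proof (uheight_pos q) as hb.
  pose proof (exp_dH_lower p q) as hlo.
  assert (hratio : exp (tcoord p - tcoord q) * uheight q = uheight p).
  { unfold uheight, Rminus; rewrite exp_plus, exp_Ropp.
    field; apply Rgt_not_eq, exp_pos. }
  unfold hnum in hlo.
  pose proof (sq_nonneg (fst p) (fst q)).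
  assert (hpp : uheight p * uheight p <= uheight p * (2 * uheight q * exp (dH p q)))
    by nra.
  apply Rmult_le_reg_l in hpp; [| exact ha].
  apply (Rmult_le_reg_r (uheight q)); [exact hb | nra].
Qed.

Lemma dH_gt_of_tgap {n} (p q : Hn n) K :
  Rabs K + 1 <= Rabs (tcoord p - tcoord q) -> K < dH p q.
Proof.
  intros hgap.
  assert (hexp : exp (Rabs (tcoord p - tcoord q)) <= 2 * exp (dH p q)).
  { unfold Rabs at 1; destruct (Rcase_abs (tcoord p - tcoord q)).
    - rewrite dH_sym; replace (- (tcoord p - tcoord q)) with (tcoord q - tcoord p)
        by ring; apply exp_tgap_le.
    - apply exp_tgap_le. }
  apply exp_lt_inv.
  assert (hK1 : exp (K + 1) <= exp (Rabs (tcoord p - tcoord q))).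
  { apply exp_le_mono; pose proof (Rle_abs K); lra. }
  rewrite exp_plus in hK1.
  pose proof (exp_ineq1 1 ltac:(lra)); pose proof (exp_pos K); nra.
Qed.

Lemma near_downward_ray {n} (p : Hn n) (x : Rn (n - 1)) u K :
  0 <= u -> dH p (x, - u) <= K ->
  uheight p <= 2 * exp K /\
  sq (fst p) x <= 4 * exp K * exp K * (uheight p * uheight p).
Proof.
  intros hu hd.
  pose proof (exp_dH_lower p (x, - u)) as hlo; unfold hnum in hlo; simpl in hlo.
  pose proof (exp_le_mono _ _ hd) as hE.
  pose proof (uheight_pos p) as ha.
  assert (hb : 0 < uheight (x, - u)) by apply uheight_pos.
  assert (hb1 : uheight (x, - u) <= 1).
  { unfold uheight; simpl; rewrite <- exp_0; apply exp_le_mono; lra. }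
  set (a := uheight p) in *; set (b := uheight (x, - u)) in *.
  set (C := exp K) in *; assert (hC : 0 < C) by apply exp_pos.
  pose proof (sq_nonneg (fst p) x).
  assert (hN : sq (fst p) x + a * a + b * b <= 2 * C * (a * b)).
  { eapply Rle_trans; [exact hlo |].
    replace (2 * a * b * exp (dH p (x, - u))) with ((2 * a * b) * exp (dH p (x, - u)))
      by ring.
    replace (2 * C * (a * b)) with ((2 * a * b) * C) by ring.
    apply Rmult_le_compat_l; [nra | exact hE]. }
  assert (ha2 : a <= 2 * C * b) by (apply (Rmult_le_reg_l a); nra).
  assert (hb2 : b <= 2 * C * a) by (apply (Rmult_le_reg_l b); nra).
  split; [nra |].
  assert (2 * C * (a * b) <= 2 * C * (a * (2 * C * a))).
  { apply Rmult_le_compat_l; [lra | apply Rmult_le_compat_l; lra]. }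
  nra.
Qed.

Lemma between_height {n} (p m q : Hn n) :
  dH p q = dH p m + dH m q ->
  uheight m * uheight m <= 4 * hnum p q.
Proof.
  intros hsplit.
  pose proof (uheight_pos p) as ha; pose proof (uheight_pos q) as hb.
  pose proof (uheight_pos m) as hT.
  pose proof (exp_dH_lower p m) as hpm; pose proof (exp_dH_lower m q) as hmq.
  pose proof (exp_dH_upper p q) as hpq.
  rewrite hsplit, exp_plus in hpq.
  unfold hnum in hpm, hmq.
  pose proof (sq_nonneg (fst p) (fst m)); pose proof (sq_nonneg (fst m) (fst q)).
  set (a := uheight p) in *; set (b := uheight q) in *; set (T := uheight m) in *.
  set (E1 := exp (dH p m)) in *; set (E2 := exp (dH m q)) in *.
  assert (h1 : T <= 2 * a * E1) by (apply (Rmult_le_reg_l T); nra).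
  assert (h2 : T <= 2 * b * E2) by (apply (Rmult_le_reg_l T); nra).
  assert (hprod : T * T <= (2 * a * E1) * (2 * b * E2))
    by (apply Rmult_le_compat; lra).
  nra.
Qed.

(* the forward ray of g stays within K of the downward vertical ray at x,
   i.e. g(s) converges to the ideal point (x, -oo) as s -> +oo *)
Definition follows_down {n} (g : R -> Hn n) (x : Rn (n - 1)) (K : R) : Prop :=
  forall s, 0 <= s -> exists u, 0 <= u /\ dH (g s) (x, - u) <= K.

(* a geodesic following a downward vertical ray goes down to height 0:
   g s stays below height 2 e^K and horizontally near x, so the upper bound of
   [exp_dH_bounds] for d_H(g s, g 0) = s gives u_{g s} e^s <= N0 / u_{g 0} *)
Lemma follows_down_descends {n} (g : R -> Hn n) (x : Rn (n - 1)) K :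
  geodesic dH g -> follows_down g x K ->
  forall e, 0 < e -> exists S0, 0 <= S0 /\ forall s, S0 <= s -> uheight (g s) < e.
Proof.
  intros hg hfol e he.
  set (C := exp K); assert (hC : 0 < C) by apply exp_pos.
  set (y0 := fst (g 0)); set (a0 := uheight (g 0)).
  assert (ha0 : 0 < a0) by apply uheight_pos.
  set (N0 := 2 * (16 * (C * C) * (C * C) + sq x y0) + 4 * (C * C) + a0 * a0).
  exists (Rmax 0 (N0 / (e * a0))); split; [apply Rmax_l |].
  intros s hs.
  assert (hs0 : 0 <= s) by (eapply Rle_trans; [apply Rmax_l | exact hs]).
  assert (hsN : N0 / (e * a0) < exp s)
    by (eapply Rle_lt_trans; [eapply Rle_trans; [apply Rmax_r | exact hs] | apply lt_exp]).
  destruct (Rlt_le_dec (uheight (g s)) e) as [ok | hbig]; [exact ok | exfalso].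
  destruct (hfol s hs0) as [u [hu hd]].
  destruct (near_downward_ray _ _ _ _ hu hd) as [hup hsq]; fold C in hup, hsq.
  pose proof (exp_dH_upper (g s) (g 0)) as hupper.
  rewrite (hg s 0), Rminus_0_r, Rabs_pos_eq in hupper by exact hs0.
  unfold hnum in hupper; fold y0 a0 in hupper.
  pose proof (sq_tri (fst (g s)) x y0) as htri.
  set (a := uheight (g s)) in *.
  pose proof (sq_nonneg x y0); pose proof (exp_pos s).
  assert (hsq' : sq (fst (g s)) x <= 16 * (C * C) * (C * C)).
  { eapply Rle_trans; [exact hsq |].
    replace (16 * (C * C) * (C * C)) with (4 * C * C * (4 * (C * C))) by ring.
    apply Rmult_le_compat_l; [nra |].
    assert (0 <= a) by lra; nra. }
  assert (hN : a * a0 * exp s <= N0).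
  { eapply Rle_trans; [exact hupper |]; unfold N0.
    assert (a * a <= 4 * (C * C)) by (assert (0 <= a) by lra; nra). lra. }
  assert (hNe : e * a0 * exp s <= N0).
  { eapply Rle_trans; [| exact hN].
    apply Rmult_le_compat_r; [lra | apply Rmult_le_compat_r; lra]. }
  apply (Rmult_lt_compat_l (e * a0)) in hsN; [| nra].
  replace (e * a0 * (N0 / (e * a0))) with N0 in hsN by (field; lra).
  lra.
Qed.

Lemma rev_involutive {X : Type} (g : R -> X) : rev (rev g) = g.
Proof.
  apply functional_extensionality; intros s; unfold rev; rewrite Ropp_involutive;
    reflexivity.
Qed.

Lemma geodesic_rev {X : Type} (d : X -> X -> R) (g : R -> X) :
  geodesic d g -> geodesic d (rev g).
Proof.
  intros hg s u; unfold rev; rewrite hg, <- Rabs_Ropp; f_equal; ring.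
Qed.

Lemma between_height_near {n} (p m q : Hn n) (x x' : Rn (n - 1)) c c' :
  dH p q = dH p m + dH m q ->
  sq (fst p) x <= c * (uheight p * uheight p) ->
  sq (fst q) x' <= c' * (uheight q * uheight q) ->
  uheight m * uheight m <=
    16 * sq x x' + (8 * c + 4) * (uheight p * uheight p)
                 + (16 * c' + 4) * (uheight q * uheight q).
Proof.
  intros hsplit hp hq.
  pose proof (between_height _ _ _ hsplit) as hmid; unfold hnum in hmid.
  pose proof (sq_tri (fst p) x (fst q)) as ht1.
  pose proof (sq_tri x x' (fst q)) as ht2; rewrite (sq_sym x' (fst q)) in ht2.
  lra.
Qed.

Lemma Rmax3_bounds a b c :
  a <= Rmax a (Rmax b c) /\ b <= Rmax a (Rmax b c) /\ c <= Rmax a (Rmax b c).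
Proof.
  pose proof (Rmax_l a (Rmax b c)); pose proof (Rmax_r a (Rmax b c));
    pose proof (Rmax_l b c); pose proof (Rmax_r b c); lra.
Qed.

Lemma small_scale D L : 0 < D -> 0 < L -> exists e, 0 < e /\ e * e * L <= D.
Proof.
  intros hD hL; exists (Rmin 1 (D / L)); split.
  - apply Rmin_pos; [lra | apply Rdiv_lt_0_compat; lra].
  - assert (h1 : Rmin 1 (D / L) <= 1) by apply Rmin_l.
    assert (hDL : Rmin 1 (D / L) <= D / L) by apply Rmin_r.
    assert (hpos : 0 < Rmin 1 (D / L))
      by (apply Rmin_pos; [lra | apply Rdiv_lt_0_compat; lra]).
    apply (Rmult_le_compat_r L) in hDL; [| lra].
    replace (D / L * L) with D in hDL by (field; lra).
    assert (Rmin 1 (D / L) * Rmin 1 (D / L) * L <= Rmin 1 (D / L) * L) by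
      (apply Rmult_le_compat_r; [lra | nra]).
    lra.
Qed.

(* A geodesic whose two ends are the ideal points (x, -oo) and (x', -oo)
   never rises above height 5 |x - x'|: apply [between_height_near] to points
   p = g S, q = g (-S') far along its two ends, low enough to make the error
   terms at most |x - x'|^2. *)
Lemma height_bound {n} (g : R -> Hn n) (x x' : Rn (n - 1)) K K' :
  geodesic dH g -> follows_down g x K -> follows_down (rev g) x' K' -> x <> x' ->
  forall s, uheight (g s) <= 5 * euc x x'.
Proof.
  intros hg hfol hfol' hne s.
  set (D := sq x x'); assert (hD : 0 < D) by apply sq_pos, hne.
  set (c := 4 * exp K * exp K); set (c' := 4 * exp K' * exp K').
  assert (hc : 0 < c) by (unfold c; pose proof (exp_pos K); nra).
  assert (hc' : 0 < c') by (unfold c'; pose proof (exp_pos K'); nra).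
  destruct (small_scale D (8 * c + 16 * c' + 8) hD ltac:(lra)) as [e [he heL]].
  destruct (follows_down_descends g x K hg hfol e he) as [S0 [_ hlow]].
  destruct (follows_down_descends (rev g) x' K' (geodesic_rev _ _ hg) hfol' e he)
    as [S0' [_ hlow']].
  set (S := Rmax S0 (Rmax s 0)); set (S' := Rmax S0' (Rmax (- s) 0)).
  destruct (Rmax3_bounds S0 s 0) as [hS0 [hsS hS]]; fold S in hS0, hsS, hS.
  destruct (Rmax3_bounds S0' (- s) 0) as [hS0' [hsS' hS']]; fold S' in hS0', hsS', hS'.
  assert (hsplit : dH (g S) (g (- S')) = dH (g S) (g s) + dH (g s) (g (- S'))).
  { rewrite !hg, !Rabs_pos_eq by lra; ring. }
  destruct (hfol S hS) as [u [hu hd]].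
  destruct (near_downward_ray _ _ _ _ hu hd) as [_ hnear].
  destruct (hfol' S' hS') as [u' [hu' hd']].
  destruct (near_downward_ray _ _ _ _ hu' hd') as [_ hnear']; unfold rev in hnear'.
  pose proof (between_height_near _ _ _ x x' c c' hsplit hnear hnear') as hmid.
  pose proof (hlow S hS0) as ha; pose proof (hlow' S' hS0') as hb; unfold rev in hb.
  pose proof (uheight_pos (g S)); pose proof (uheight_pos (g (- S'))).
  set (a := uheight (g S)) in *; set (b := uheight (g (- S'))) in *.
  assert (herr : (8 * c + 4) * (a * a) + (16 * c' + 4) * (b * b)
                 <= (8 * c + 16 * c' + 8) * (e * e)).
  { assert ((8 * c + 4) * (a * a) <= (8 * c + 4) * (e * e))
      by (apply Rmult_le_compat_l; nra).
    assert ((16 * c' + 4) * (b * b) <= (16 * c' + 4) * (e * e))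
      by (apply Rmult_le_compat_l; nra).
    lra. }
  assert (heuc : euc x x' * euc x x' = D) by (rewrite euc_sq; apply sqrt_sqrt; lra).
  apply Rsqr_incr_0_var; [| pose proof (euc_pos x x' hne); lra].
  unfold Rsqr; fold D in hmid; nra.
Qed.

Lemma up_down_apart {n} (x x' : Rn (n - 1)) :
  ~ asymptotic dH (eta x) (rev (eta x')).
Proof.
  intros [K [hfar _]].
  destruct (hfar (Rabs K + 1)) as [u [hu hd]]; [pose proof (Rabs_pos K); lra |].
  apply (Rle_not_lt _ _ hd), dH_gt_of_tgap; unfold rev, eta, tcoord; simpl.
  rewrite (Rabs_pos_eq (_ - _)); pose proof (Rabs_pos K); lra.
Qed.

Lemma down_up_apart {n} (x x' : Rn (n - 1)) :
  ~ asymptotic dH (rev (eta x)) (eta x').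
Proof.
  intros [K [hfar _]].
  destruct (hfar (Rabs K + 1)) as [u [hu hd]]; [pose proof (Rabs_pos K); lra |].
  apply (Rle_not_lt _ _ hd), dH_gt_of_tgap; unfold rev, eta, tcoord; simpl.
  rewrite (Rabs_left1 (_ - _)); pose proof (Rabs_pos K); lra.
Qed.

Lemma down_down_apart {n} (x x' : Rn (n - 1)) :
  x <> x' -> ~ asymptotic dH (rev (eta x)) (rev (eta x')).
Proof.
  intros hne [K [hfar _]].
  set (D := sq x x'); assert (hD : 0 < D) by apply sq_pos, hne.
  set (C := exp K); assert (hC : 0 < C) by apply exp_pos.
  set (s := Rmax 0 (2 * C / D)).
  destruct (hfar s (Rmax_l _ _)) as [u [hu hd]].
  pose proof (exp_dH_lower (rev (eta x) s) (rev (eta x') u)) as hlo.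
  pose proof (exp_le_mono _ _ hd) as hE; fold C in hE.
  set (E := exp (dH (rev (eta x) s) (rev (eta x') u))) in *.
  unfold hnum, uheight, rev, eta, tcoord in hlo; simpl in hlo; fold D in hlo.
  pose proof (exp_pos (- s)); pose proof (exp_pos (- u)).
  assert (hu1 : exp (- u) <= 1) by (rewrite <- exp_0; apply exp_le_mono; lra).
  assert (hDs : D <= 2 * C * exp (- s)).
  { assert (h1 : 2 * exp (- s) * exp (- u) * E <= 2 * exp (- s) * exp (- u) * C)
      by (apply Rmult_le_compat_l; [nra | exact hE]).
    assert (h2 : 2 * exp (- s) * C * exp (- u) <= 2 * exp (- s) * C * 1)
      by (apply Rmult_le_compat_l; [nra | exact hu1]).
    pose proof (Rle_0_sqr (exp (- s))); pose proof (Rle_0_sqr (exp (- u))).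
    unfold Rsqr in *; lra. }
  assert (hsD : 2 * C / D < exp s)
    by (eapply Rle_lt_trans; [apply Rmax_r | apply lt_exp]).
  apply (Rmult_lt_compat_l D) in hsD; [| exact hD].
  replace (D * (2 * C / D)) with (2 * C) in hsD by (field; lra).
  apply (Rmult_le_compat_r (exp s)) in hDs; [| left; apply exp_pos].
  replace (2 * C * exp (- s) * exp s) with (2 * C) in hDs
    by (rewrite exp_Ropp; field; apply Rgt_not_eq, exp_pos).
  lra.
Qed.

Lemma vertical_triangle_third_side {n} (x x' : Rn (n - 1)) (sigma : R -> Hn n) :
  x <> x' -> ideal_triangle dH (eta x) (eta x') sigma ->
  exists h K K', (h = sigma \/ h = rev sigma) /\ geodesic dH h /\
    follows_down h x K /\ follows_down (rev h) x' K'.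
Proof.
  intros hne [_ [_ [hsig [h1 [h2 [h3 [o1 [o2 [o3 [A12 [A23 A31]]]]]]]]]]].
  destruct o1 as [-> | ->]; destruct o2 as [-> | ->].
  - exfalso; exact (up_down_apart x x' A12).
  - destruct A31 as [K [hK _]]; destruct A23 as [K' [_ hK']].
    exists h3, K, K'; split; [exact o3 |]; split.
    { destruct o3 as [-> | ->]; [exact hsig | apply geodesic_rev, hsig]. }
    split; [exact hK |].
    intros s hs; destruct (hK' s hs) as [u [hu hd]].
    exists u; split; [exact hu | rewrite dH_sym; exact hd].
  - exfalso; exact (down_down_apart x x' hne A12).
  - rewrite rev_involutive in A12; exfalso; exact (down_up_apart x x' A12).
Qed.

Lemma vertical_triangle_top {n} (x x' : Rn (n - 1)) (sigma : R -> Hn n) :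
  x <> x' -> ideal_triangle dH (eta x) (eta x') sigma ->
  forall s, tcoord (sigma s) <= ln 5 + ln (euc x x').
Proof.
  intros hne htri s.
  destruct (vertical_triangle_third_side x x' sigma hne htri)
    as [h [K [K' [hor [hgeo [hfol hfol']]]]]].
  pose proof (height_bound h x x' K K' hgeo hfol hfol' hne) as hbound.
  assert (hs : uheight (sigma s) <= 5 * euc x x').
  { destruct hor as [-> | ->]; [apply hbound |].
    specialize (hbound (- s)); unfold rev in hbound; rewrite Ropp_involutive in hbound;
      exact hbound. }
  rewrite <- ln_mult by (pose proof (euc_pos x x' hne); lra).
  apply exp_le_inv; rewrite exp_ln by (pose proof (euc_pos x x' hne); lra).
  exact hs.
Qed.

Definition closed_R (S : R -> Prop) : Prop :=
  forall h, (forall e, 0 < e -> exists t, S t /\ Rabs (t - h) < e) -> S h.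

(* a limit point of S1 u S2 not in S1 is isolated from S1, hence a limit point of S2 *)
Lemma closed_R_union (S1 S2 : R -> Prop) :
  closed_R S1 -> closed_R S2 -> closed_R (fun t => S1 t \/ S2 t).
Proof.
  intros c1 c2 h hacc.
  destruct (classic (S1 h)) as [hS1 | hnS1]; [left; exact hS1 | right].
  assert (hiso : exists e1, 0 < e1 /\ forall t, S1 t -> e1 <= Rabs (t - h)).
  { apply NNPP; intros hno; apply hnS1, c1; intros e he.
    apply NNPP; intros hno'; apply hno; exists e; split; [exact he |].
    intros t ht; apply Rnot_lt_le; intros hlt; apply hno'; exists t; auto. }
  destruct hiso as [e1 [he1 hfar]].
  apply c2; intros e he.
  destruct (hacc (Rmin e e1) (Rmin_pos _ _ he he1)) as [t [[ht | ht] hdist]].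
  - exfalso; specialize (hfar t ht); pose proof (Rmin_r e e1); lra.
  - exists t; split; [exact ht | pose proof (Rmin_l e e1); lra].
Qed.

Lemma closed_R_has_min (S : R -> Prop) lb :
  closed_R S -> (exists t, S t) -> (forall t, S t -> lb <= t) -> exists h, is_min S h.
Proof.
  intros hc [t0 ht0] hlb.
  set (E := fun z => S (- z)).
  destruct (completeness E) as [m [hub hleast]].
  - exists (- lb); intros z hz; apply hlb in hz; lra.
  - exists (- t0); unfold E; rewrite Ropp_involutive; exact ht0.
  - exists (- m); split.
    + apply hc; intros e he; apply NNPP; intros hno.
      assert (hub' : is_upper_bound E (m - e)).
      { intros z hz; apply Rnot_lt_le; intros hlt; apply hno.
        exists (- z); split; [exact hz |].
        pose proof (hub z hz); rewrite Rabs_pos_eq; lra. }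
      apply hleast in hub'; lra.
    + intros t ht.
      assert (hE : E (- t)) by (unfold E; rewrite Ropp_involutive; exact ht).
      apply hub in hE; lra.
Qed.

Lemma dist_img_le_closed {X : Type} (d : X -> X -> R) (Fx g : R -> X) r :
  is_metric d -> geodesic d Fx -> closed_R (fun t => dist_img_le d (Fx t) g r).
Proof.
  intros [_ [_ [_ htr]]] hgeo h hacc e he.
  destruct (hacc (e / 2)) as [t [ht hth]]; [lra |].
  destruct (ht (e / 2)) as [u hu]; [lra |].
  exists u; pose proof (htr (Fx h) (Fx t) (g u)) as htri.
  rewrite hgeo, Rabs_minus_sym in htri; lra.
Qed.

Section DisplacedHeight.

Variables (n : nat) (X : Type) (d : X -> X -> R) (F : Hn n -> X).

Definition separated (M K : R) : Prop :=
  forall y y' t, M < exp (- t) * euc y y' -> K < d (F (y, t)) (F (y', t)).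

Lemma coarse_separation
  (H4 : forall (xk xk' : nat -> Rn (n - 1)) (tk : nat -> R),
          cv_infty (fun k => exp (- tk k) * euc (xk k) (xk' k)) ->
          cv_infty (fun k => d (F (xk k, tk k)) (F (xk' k, tk k)))) K :
  exists M, 0 < M /\ separated M K.
Proof.
  apply NNPP; intros hno.
  (* otherwise, for each k there is a counterexample of separation > k + 1 *)
  assert (hbad : forall k : nat, exists p : Rn (n - 1) * Rn (n - 1) * R,
      INR k + 1 < exp (- snd p) * euc (fst (fst p)) (snd (fst p)) /\
      d (F (fst (fst p), snd p)) (F (snd (fst p), snd p)) <= K).
  { intros k; apply NNPP; intros hk; apply hno.
    exists (INR k + 1); split; [pose proof (pos_INR k); lra |].
    intros y y' t hsep; apply Rnot_le_lt; intros hle; apply hk.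
    exists (y, y', t); split; assumption. }
  destruct (choice _ hbad) as [p hp].
  assert (hcv : cv_infty (fun k =>
                  exp (- snd (p k)) * euc (fst (fst (p k))) (snd (fst (p k))))).
  { intros B; destruct (INR_unbounded B) as [N hN]; exists N; intros k hk.
    apply le_INR in hk; destruct (hp k) as [hsep _]; lra. }
  destruct (H4 _ _ _ hcv K) as [N hN].
  specialize (hN N (Nat.le_refl N)); destruct (hp N) as [_ hle]; simpl in hN; lra.
Qed.

Variables (delta eps Rc : R).
Hypothesis Hmet : is_metric d.
Hypothesis Heps : 0 < eps.
Hypothesis H1 : forall x : Rn (n - 1), geodesic d (fun t => F (eta x t)).
Hypothesis H3 : forall (x x' : Rn (n - 1)) (t : R),
    exp (- t) * euc x x' < eps -> d (F (x, t)) (F (x', t)) <= Rc.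

Lemma close_high_up (y y' : Rn (n - 1)) s :
  0 < euc y y' -> ln (euc y y' / eps) < s -> d (F (y, s)) (F (y', s)) <= Rc.
Proof.
  intros hE hs; apply H3.
  apply exp_increasing in hs; rewrite exp_ln in hs by (apply Rdiv_lt_0_compat; lra).
  rewrite exp_Ropp; pose proof (exp_pos s).
  apply (Rmult_lt_reg_l (exp s)); [lra |].
  replace (exp s * (/ exp s * euc y y')) with (euc y y') by (field; lra).
  apply (Rmult_lt_compat_l eps) in hs; [| exact Heps].
  replace (eps * (euc y y' / eps)) with (euc y y') in hs by (field; lra); lra.
Qed.

(* if F(y,t) is r-close to some F(y',u), then it is (2r + Rc)-close to F(y',t):
   comparing both vertical geodesics with a height where they are Rc-close
   shows |u - t| < r + Rc *)
Lemma level_distance_bound (y y' : Rn (n - 1)) t u r :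
  0 < euc y y' -> d (F (y, t)) (F (y', u)) < r ->
  d (F (y, t)) (F (y', t)) < 2 * r + Rc.
Proof.
  intros hE hd; destruct Hmet as [_ [_ [hsym htr]]].
  set (s := Rmax (Rmax t u) (ln (euc y y' / eps) + 1)).
  assert (ht : t <= s) by (unfold s; eapply Rle_trans; [apply Rmax_l | apply Rmax_l]).
  assert (hu : u <= s) by (unfold s; eapply Rle_trans; [apply Rmax_r | apply Rmax_l]).
  assert (hclose : d (F (y, s)) (F (y', s)) <= Rc).
  { apply close_high_up; [exact hE |].
    assert (ln (euc y y' / eps) + 1 <= s) by apply Rmax_r; lra. }
  pose proof (H1 y t s) as gy; pose proof (H1 y' u s) as gy'.
  pose proof (H1 y' u t) as gut; unfold eta in gy, gy', gut.
  rewrite Rabs_left1 in gy, gy' by lra.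
  assert (hgap : Rabs (u - t) < r + Rc).
  { (* s - t <= r + (s - u) + Rc, going from F(y,t) to F(y,s) through F(y',u), F(y',s) *)
    pose proof (htr (F (y, t)) (F (y', u)) (F (y, s))) as t1.
    pose proof (htr (F (y', u)) (F (y', s)) (F (y, s))) as t2.
    (* s - u <= r + (s - t) + Rc, going from F(y',u) to F(y',s) through F(y,t), F(y,s) *)
    pose proof (htr (F (y', u)) (F (y, t)) (F (y', s))) as t3.
    pose proof (htr (F (y, t)) (F (y, s)) (F (y', s))) as t4.
    rewrite (hsym (F (y', s)) (F (y, s))) in t2.
    rewrite (hsym (F (y', u)) (F (y, t))) in t3.
    unfold Rabs; destruct (Rcase_abs (u - t)); lra. }
  pose proof (htr (F (y, t)) (F (y', u)) (F (y', t))); lra.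
Qed.

Hypothesis HRc : 0 < Rc.

Lemma Rc_le_Delta : Rc <= Defs.Delta delta eps Rc.
Proof.
  unfold Defs.Delta; eapply Rle_trans; [| apply Rmax_r].
  assert (0 < 2 * Rc / eps) by (apply Rdiv_lt_0_compat; lra); lra.
Qed.

Lemma near_side_lower_bound M (y y' : Rn (n - 1)) t r :
  0 < M -> separated M (2 * (r + 1) + Rc) -> 0 < euc y y' ->
  dist_img_le d (F (y, t)) (fun u => F (y', u)) r ->
  ln (euc y y') - ln M <= t.
Proof.
  intros hM hsep hE hnear.
  destruct (hnear 1 ltac:(lra)) as [u hu].
  pose proof (level_distance_bound y y' t u (r + 1) hE hu) as hlevel.
  assert (hsmall : exp (- t) * euc y y' <= M).
  { apply Rnot_lt_le; intros hlt; apply hsep in hlt; lra. }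
  assert (heuc : euc y y' <= M * exp t).
  { rewrite exp_Ropp in hsmall; pose proof (exp_pos t).
    apply (Rmult_le_compat_l (exp t)) in hsmall; [| lra].
    replace (exp t * (/ exp t * euc y y')) with (euc y y') in hsmall by (field; lra).
    lra. }
  enough (ln (euc y y') <= ln M + t) by lra.
  apply exp_le_inv; rewrite exp_plus, !exp_ln by lra; exact heuc.
Qed.

Lemma height_set_lower_bound M (x x' : Rn (n - 1)) t :
  0 < M -> separated M (2 * (Defs.Delta delta eps Rc + 1) + Rc) -> x <> x' ->
  height_set d F delta eps Rc x x' t -> ln (euc x x') - ln M <= t.
Proof.
  intros hM hsep hne [hnear | hnear].
  - exact (near_side_lower_bound M x x' t _ hM hsep (euc_pos x x' hne) hnear).
  - rewrite euc_sym.
    exact (near_side_lower_bound M x' x t _ hM hsep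
             (euc_pos x' x (not_eq_sym hne)) hnear).
Qed.

(* the displaced height h_T exists: the height set is closed, nonempty
   (it contains every large enough height) and bounded below *)
Lemma height_set_has_min M (x x' : Rn (n - 1)) :
  0 < M -> separated M (2 * (Defs.Delta delta eps Rc + 1) + Rc) -> x <> x' ->
  exists h, is_min (height_set d F delta eps Rc x x') h.
Proof.
  intros hM hsep hne.
  apply (closed_R_has_min _ (ln (euc x x') - ln M)).
  - apply closed_R_union; apply dist_img_le_closed; [exact Hmet | apply (H1 x) |
                                                    exact Hmet | apply (H1 x')].
  - exists (ln (euc x x' / eps) + 1); left; intros e he.
    exists (ln (euc x x' / eps) + 1).
    pose proof (close_high_up x x' (ln (euc x x' / eps) + 1) (euc_pos x x' hne)
                  ltac:(lra)).
    pose proof Rc_le_Delta; lra.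
  - intros t ht; exact (height_set_lower_bound M x x' t hM hsep hne ht).
Qed.

End DisplacedHeight.

Theorem claim2p4 (n : nat) (X : Type) (d : X -> X -> R) (F : Hn n -> X)
  (delta eps Rc : R)
  (Hmet : is_metric d) (Hgeo : geodesic_space d)
  (Hdelta : 0 < delta) (Heps : 0 < eps) (HRc : 0 < Rc)
  (H1 : forall x : Rn (n - 1), geodesic d (fun t => F (eta x t)))
  (H2 : forall x x' : Rn (n - 1), x <> x' ->
          exists g : R -> X,
            slim_ideal_triangle d delta (fun t => F (eta x t)) (fun t => F (eta x' t)) g)
  (H3 : forall (x x' : Rn (n - 1)) (t : R),
          exp (- t) * euc x x' < eps -> d (F (x, t)) (F (x', t)) <= Rc)
  (H4 : forall (xk xk' : nat -> Rn (n - 1)) (tk : nat -> R),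
          cv_infty (fun k => exp (- tk k) * euc (xk k) (xk' k)) ->
          cv_infty (fun k => d (F (xk k, tk k)) (F (xk' k, tk k)))) :
  exists C0 : R,
    forall (x x' : Rn (n - 1)) (sigma : R -> Hn n),
      x <> x' ->
      ideal_triangle (@dH n) (eta x) (eta x') sigma ->
      forall s0 : R, (forall s, tcoord (sigma s) <= tcoord (sigma s0)) ->
      exists hT : R,
        is_min (height_set d F delta eps Rc x x') hT /\
        tcoord (sigma s0) - hT <= C0.
Proof.
  destruct (coarse_separation n X d F H4 (2 * (Defs.Delta delta eps Rc + 1) + Rc))
    as [M [hM hsep]].
  exists (ln 5 + ln M).
  intros x x' sigma hne htri s0 _.
  destruct (height_set_has_min n X d F delta eps Rc Hmet Heps H1 H3 HRc
              M x x' hM hsep hne) as [hT [hS hmin]].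
  exists hT; split; [split; assumption |].
  (* t(r) <= ln 5 + ln |x - x'|  and  h_T >= ln |x - x'| - ln M *)
  pose proof (vertical_triangle_top x x' sigma hne htri s0) as htop.
  pose proof (height_set_lower_bound n X d F delta eps Rc Hmet Heps H1 H3
                M x x' hT hM hsep hne hS) as hlow.
  lra.
Qed.
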